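(* Let $\mathbf{C}$ be a category of $\mathbf{FI}$ type, $c$ an object and $V$ a finite-dimensional $G_c$-representation with character $\chi_V$. Then the character of the $\mathbf{C}$-module $\mathrm{Ind}_c(V)$ is $$\chi_{\mathrm{Ind}_c(V)}=\sum_{\mu\in\mathrm{conj}(G_c)}\chi_V(\mu)\binom{X}{\mu},$$ where $\mathrm{conj}(G_c)$ is the set of conjugacy classes of $G_c$ and $\chi_V(\mu)$ is the value of $\chi_V$ on any element of $\mu$. In particular it is a character polynomial of degree $c$.
   Context: A category $\mathbf{C}$ is of $\mathbf{FI}$ type if: (1) all Hom-sets are finite; (2) every morphism is a monomorphism and every endomorphism is an isomorphism; (3) for all objects $c,d$ the group $G_d=\mathrm{Aut}_{\mathbf{C}}(d)$ acts transitively on $\mathrm{Hom}_{\mathbf{C}}(c,d)$; (4) for every $d$ only finitely many isomorphism classes of $c$ have $\mathrm{Hom}(c,d)\neq\emptyset$; (5) every pair $c_1\to d\leftarrow c_2$ has a pullback, and every pair $f_i:p\to c_i$ has a weak push-out, i.e. a commutative pullback square $g_i:c_i\to d$ such that for every other pullback square $h_i:c_i\to z$ with $h_1f_1=h_2f_2$ there is a unique $h:d\to z$ with $hg_i=h_i$. $\mathrm{Ind}_c(V)$ is the $\mathbf{C}$-module $d\mapsto\mathbb{C}[\mathrm{Hom}(c,d)]\otimes_{\mathbb{C}[G_c]}V$ (morphisms act by postcomposition); its character is the collection of characters of the $G_d$-representations $\mathrm{Ind}_c(V)_d$. Binomial set: $\binom{d}{c}=\mathrm{Hom}(c,d)/G_c$.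 For a conjugacy class $\mu\subseteq G_c$, $\binom{X}{\mu}$ is the class function on every $G_d$ given by $\sigma\mapsto\#\{[f]\in\binom{d}{c}:\exists\psi\in\mu,\ \sigma f=f\psi\}$, of degree $c$. Character polynomials are $\mathbb{C}$-linear combinations of these. *)

From HB Require Import structures.
From mathcomp Require Import all_boot all_order all_algebra all_fingroup.
From mathcomp Require Import mxrepresentation algC.
Set Implicit Arguments. Unset Strict Implicit. Unset Printing Implicit Defensive.
Import GRing.Theory.
Local Open Scope ring_scope.

Record category := Category {
  Obj : Type;
  Hom : Obj -> Obj -> finType;
  compm : forall a b c : Obj, Hom b c -> Hom a b -> Hom a c;
  idm : forall a : Obj, Hom a a;
  compA : forall a b c d (f : Hom c d) (g : Hom b c) (h : Hom a b),
      compm f (compm g h) = compm (compm f g) h;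
  comp1m : forall a b (f : Hom a b), compm (idm b) f = f;
  compm1 : forall a b (f : Hom a b), compm f (idm a) = f
}.

Arguments compm {_ _ _ _} _ _.
Arguments idm {_} _.
Arguments Hom : clear implicits.

Section FIType.
Variable C : category.
Local Notation Ob := (Obj C).
Local Notation H := (Hom C).

Definition is_iso (a b : Ob) (f : H a b) : Prop :=
  exists g : H b a, compm g f = idm a /\ compm f g = idm b.

Definition isomorphic (a b : Ob) : Prop := exists f : H a b, is_iso f.

Definition is_mono (b c : Ob) (f : H b c) : Prop :=
  forall a (g h : H a b), compm f g = compm f h -> g = h.

Definition is_pullback (p c1 c2 d : Ob) (f1 : H p c1) (f2 : H p c2)
    (g1 : H c1 d) (g2 : H c2 d) : Prop :=
  compm g1 f1 = compm g2 f2 /\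
  forall q (h1 : H q c1) (h2 : H q c2), compm g1 h1 = compm g2 h2 ->
    exists! h : H q p, compm f1 h = h1 /\ compm f2 h = h2.

Definition FItype : Prop :=
  (* (1) finiteness of Hom-sets: built in (Hom a b is a finType) *)
  (forall b c (f : H b c), is_mono f) /\
  (forall d (f : H d d), is_iso f) /\
  (forall c d (f g : H c d), exists s : H d d, compm s f = g) /\
  (forall d, exists (k : nat) (e : 'I_k -> Ob),
      forall c, (exists f : H c d, True) -> exists i, isomorphic c (e i)) /\
  (forall c1 c2 d (g1 : H c1 d) (g2 : H c2 d),
      exists p (f1 : H p c1) (f2 : H p c2), is_pullback f1 f2 g1 g2) /\
  (forall p c1 c2 (f1 : H p c1) (f2 : H p c2),
      exists d (g1 : H c1 d) (g2 : H c2 d),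
        is_pullback f1 f2 g1 g2 /\
        forall z (h1 : H c1 z) (h2 : H c2 z), is_pullback f1 f2 h1 h2 ->
          exists! h : H d z, compm h g1 = h1 /\ compm h g2 = h2).

(* Conjugacy classes of G_c = Hom(c,c) (every endomorphism is an iso). *)
(* phi is conjugate to psi iff phi = g psi g^-1 for some g, i.e.       *)
(* g psi = phi g.                                                      *)
Definition conjclass (c : Ob) (psi : H c c) : {set H c c} :=
  [set phi | [exists g : H c c, compm g psi == compm phi g]].

Definition conjclasses (c : Ob) : {set {set H c c}} :=
  [set conjclass psi | psi : H c c].

Definition class_rep (c : Ob) (mu : {set H c c}) : H c c :=
  odflt (idm c) [pick psi in mu].

(* Binomial set  (d choose c) = Hom(c,d)/G_c : the orbits of the right
   action of G_c on Hom(c,d) by precomposition. *)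
Definition rorbit (c d : Ob) (f : H c d) : {set H c d} :=
  [set compm f psi | psi : H c c].

Definition binomset (c d : Ob) : {set {set H c d}} :=
  [set rorbit f | f : H c d].

Definition binomX (c : Ob) (mu : {set H c c}) (d : Ob) (sigma : H d d) : nat :=
  #|[set O in binomset c d |
      [exists f in O, exists psi in mu, compm sigma f == compm f psi]]|.

(* V = C^n (column vectors), with G_c acting on the left through a     *)
(* matrix representation rho : Hom(c,c) -> 'M_n  (psi . v = rho psi v).*)
(* C[Hom(c,d)] (x) V is modelled as matrices 'M_(#|Hom(c,d)|, n)       *)
(* (row k = coefficient vector (transposed) of the basis element       *)
(* enum_val k), flattened to row vectors by mxvec.                     *)
Section Ind.
Variables (c : Ob) (n : nat) (rho : H c c -> 'M[algC]_n) (d : Ob).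

Local Notation N := (#|H c d| * n)%N.

Definition tens (f : H c d) (v : 'cV[algC]_n) : 'rV[algC]_N :=
  mxvec (\matrix_(k < #|H c d|, j < n) ((enum_val k == f)%:R * v j 0)).

Definition tens_rel (f : H c d) (psi : H c c) (j : 'I_n) : 'rV[algC]_N :=
  tens (compm f psi) (delta_mx j 0) - tens f (rho psi *m delta_mx j 0).

(* the subspace of C[Hom(c,d)] (x)_C V spanned by the balancing
   relations; C[Hom(c,d)] (x)_{C[G_c]} V is the quotient by it. *)
Definition tens_rels : 'M[algC]_N :=
  (\sum_(f : H c d) \sum_(psi : H c c) \sum_(j < n) <<tens_rel f psi j>>)%MS.

Definition postcomp_mx (sigma : H d d) : 'M[algC]_(#|H c d|) :=
  \matrix_(k, i) (compm sigma (enum_val i) == enum_val k)%:R.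

Definition act_tens (sigma : H d d) : 'M[algC]_N :=
  lin1_mx (fun x : 'rV[algC]_N => mxvec (postcomp_mx sigma *m vec_mx x)).

(* the induced action on the factor module  (C[Hom(c,d)] (x) V) / rels,
   using MathComp's factor-module coordinates (cf. factmod_mx) *)
Definition Ind_mx (sigma : H d d) :=
  in_factmod tens_rels (@val_factmod _ _ tens_rels _ 1%:M *m act_tens sigma).

Definition Ind_char (sigma : H d d) : algC := \tr (Ind_mx sigma).

End Ind.

Definition rep_char (c : Ob) (n : nat) (rho : H c c -> 'M[algC]_n)
    (psi : H c c) : algC := \tr (rho psi).

End FIType.

From Pilot Require Import Defs.
From mathcomp Require Import all_boot ssralg zmodp matrix mxalgebra mxrepresentation algC.
Set Implicit Arguments. Unset Strict Implicit. Unset Printing Implicit Defensive.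
Import GRing.Theory.
Local Open Scope ring_scope.

(* Choose a representative r(f) of each right G_c-orbit in Hom(c,d) and write
   f = r(f) phi(f); phi(f) in G_c is unique because morphisms are monic. The map
   f (x) v |-> r(f) (x) phi(f) v is idempotent with kernel the span of the
   balancing relations, so the trace of sigma on Ind_c(V)_d equals the trace of
   sigma followed by this projection. Its diagonal block at f vanishes unless
   f = r(f) and sigma f = f psi with psi in G_c, and then has trace chi_V(psi).
   The class of psi depends only on the orbit of f, so summing over the
   representatives f gives sum_mu chi_V(mu) binom(X, mu)(sigma). *)

Lemma mul_rV_lin1_fun (R : comNzRingType) m n (h : 'rV[R]_m -> 'rV[R]_n) :
  {morph h : x y / x + y} -> (forall a x, h (a *: x) = a *: h x) ->
  forall u, u *m lin1_mx h = h u.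
Proof.
move=> hD hZ u; have h0 : h 0 = 0 by rewrite -(scale0r 0) hZ scale0r.
rewrite [u in RHS]row_sum_delta (big_morph h hD h0); apply/rowP=> i.
by rewrite mxE summxE; apply: eq_bigr => j _; rewrite hZ !mxE.
Qed.

Lemma sum_enum_val_eq (T : finType) (R : nzRingType) (x : T) (G : 'I_#|T| -> R) :
  \sum_(i < #|T|) (enum_val i == x)%:R * G i = G (enum_rank x).
Proof.
rewrite (bigD1 (enum_rank x)) //= enum_rankK eqxx mul1r big1 ?addr0 // => i ne.
by rewrite -(inj_eq enum_rank_inj) enum_valK (negPf ne) mul0r.
Qed.

Lemma mxtrace_mxvec (R : nzRingType) m n (M : 'M[R]_(m * n)) :
  \tr M = \sum_(i < m) \sum_(j < n) (mxvec (delta_mx i j) *m M) 0 (mxvec_index i j).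
Proof.
rewrite /mxtrace (reindex _ (curry_mxvec_bij m n)) pair_bigA /=.
by apply: eq_bigr => -[i j] _; rewrite mxvec_delta -rowE mxE.
Qed.

Section ProjectionAlong.
Variables (F : fieldType) (N : nat) (U : 'M[F]_N).

(* For row vectors, these two conditions say that P is idempotent with kernel U. *)
Definition proj_along (P : 'M[F]_N) : bool := (U *m P == 0) && (1%:M - P <= U)%MS.

Lemma proj_alongP P : reflect (U *m P = 0 /\ (1%:M - P <= U)%MS) (proj_along P).
Proof. by apply: (iffP andP) => -[UP sP]; split=> //; apply/eqP. Qed.

Lemma proj_along_factmod : proj_along (val_factmod (in_factmod U 1%:M)).
Proof.
apply/andP; split.
  by rewrite val_factmodE in_factmodE mul1mx mulmxA -in_factmodE -val_factmodE
             val_factmod_eq0 in_factmod_eq0.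
by rewrite -{1}(add_sub_fact_mod U 1%:M) addrK val_submodP.
Qed.

(* The trace of an endomorphism A of the quotient by an A-stable U can be
   computed with any projection along U. *)
Lemma mxtrace_proj_along (A P Q : 'M[F]_N) :
  (U *m A <= U)%MS -> proj_along P -> proj_along Q -> \tr (A *m P) = \tr (A *m Q).
Proof.
move=> sUA /proj_alongP[UP sP] /proj_alongP[UQ sQ].
have kill (X B : 'M[F]_N) : U *m B = 0 -> (X <= U)%MS -> X *m B = 0.
  by move=> UB /submxP[D ->]; rewrite -mulmxA UB mulmx0.
have AQ : A *m Q = P *m A *m Q.
  apply/eqP; rewrite -subr_eq0 -{1}[A]mul1mx -!mulmxBl.
  by rewrite (kill _ _ UQ) // (submx_trans _ sUA) ?submxMr.
have QP : Q *m P = P.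
  by apply/eqP; rewrite eq_sym -subr_eq0 -{1}[P]mul1mx -mulmxBl (kill _ _ UP sQ).
by rewrite AQ -mulmxA [RHS]mxtrace_mulC -mulmxA QP.
Qed.

Lemma mxtrace_factmod (A P : 'M[F]_N) : (U *m A <= U)%MS -> proj_along P ->
  \tr (in_factmod U (val_factmod 1%:M *m A)) = \tr (A *m P).
Proof.
move=> sUA UP; rewrite (mxtrace_proj_along sUA UP proj_along_factmod).
by rewrite in_factmodE -mulmxA mxtrace_mulC -mulmxA -val_factmodE.
Qed.

End ProjectionAlong.

Section FICategory.
Variables (C : category) (hC : FItype C).

Lemma FItype_mono b c (f : Hom C b c) : is_mono f.
Proof. by case: hC. Qed.

Lemma FItype_endo_iso d (f : Hom C d d) : is_iso f.
Proof. by case: hC => _ []. Qed.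

Section RightOrbits.
Variables c d : Obj C.
Implicit Types f g : Hom C c d.

Lemma rorbitP f g : reflect (exists psi, g = compm f psi) (g \in rorbit f).
Proof. by apply: (iffP imsetP) => [[psi _ ->]|[psi ->]]; exists psi. Qed.

Lemma mem_rorbit f : f \in rorbit f.
Proof. by apply/rorbitP; exists (idm c); rewrite compm1. Qed.

Lemma rorbit_comp f psi : rorbit (compm f psi) = rorbit f.
Proof.
apply/setP => g; apply/rorbitP/rorbitP => -[a ->].
  by exists (compm psi a); rewrite Defs.compA.
have [b [_ psib]] := FItype_endo_iso psi.
by exists (compm b a); rewrite Defs.compA -(Defs.compA f psi b) psib compm1.
Qed.

(* A chosen representative of the orbit f G_c and the element of G_c moving it
   to f, which is unique because morphisms are monic. *)
Definition orbit_rep f : Hom C c d := odflt f [pick g in rorbit f].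

Definition orbit_coord f : Hom C c c :=
  odflt (idm c) [pick psi | compm (orbit_rep f) psi == f].

Lemma orbit_rep_mem f : orbit_rep f \in rorbit f.
Proof. by rewrite /orbit_rep; case: pickP => //= _; apply: mem_rorbit. Qed.

Lemma eq_orbit_rep f g : rorbit f = rorbit g -> orbit_rep f = orbit_rep g.
Proof. by rewrite /orbit_rep => ->; case: pickP => //= /(_ g); rewrite mem_rorbit. Qed.

Lemma orbit_rep_comp f psi : orbit_rep (compm f psi) = orbit_rep f.
Proof. by apply: eq_orbit_rep; apply: rorbit_comp. Qed.

Lemma orbit_repK f : orbit_rep (orbit_rep f) = orbit_rep f.
Proof. by have /rorbitP[a Ea] := orbit_rep_mem f; rewrite {1}Ea orbit_rep_comp. Qed.

Lemma orbit_repP f : compm (orbit_rep f) (orbit_coord f) = f.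
Proof.
have /rorbitP[a Ea] := orbit_rep_mem f; have [b [_ ab]] := FItype_endo_iso a.
rewrite /orbit_coord; case: pickP => [psi /eqP //|/(_ b)].
by rewrite Ea -Defs.compA ab compm1 eqxx.
Qed.

Lemma orbit_coord_comp f psi : orbit_coord (compm f psi) = compm (orbit_coord f) psi.
Proof.
apply: (@FItype_mono _ _ (orbit_rep f)).
by rewrite -{1}(orbit_rep_comp f psi) orbit_repP Defs.compA orbit_repP.
Qed.

Lemma sum_binomset (R : nmodType) (G : {set Hom C c d} -> R) :
  \sum_(O in binomset c d) G O = \sum_(f | orbit_rep f == f) G (rorbit f).
Proof.
have -> : binomset c d = [set rorbit f | f in [set f | orbit_rep f == f]].
  apply/setP => O; apply/imsetP/imsetP => -[f _ ->]; last by exists f.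
  have /rorbitP[a Ea] := orbit_rep_mem f.
  by exists (orbit_rep f); rewrite ?inE ?orbit_repK // Ea rorbit_comp.
rewrite big_imset /=; last first.
  move=> f g; rewrite !inE => /eqP fr /eqP gr /eq_orbit_rep.
  by rewrite fr gr.
by apply: eq_bigl => f; rewrite inE.
Qed.

End RightOrbits.

Section Conjugacy.
Variable c : Obj C.
Implicit Types a x : Hom C c c.

Lemma conjclassP a x : reflect (exists g, compm g a = compm x g) (x \in conjclass a).
Proof. by rewrite inE; apply: (iffP existsP) => -[g /eqP]; exists g. Qed.

Lemma conjclass_refl a : a \in conjclass a.
Proof. by apply/conjclassP; exists (idm c); rewrite comp1m compm1. Qed.

Lemma conjclass_transr a x : x \in conjclass a -> conjclass x = conjclass a.
Proof.
case/conjclassP => g ga; have [g' [g'g gg']] := FItype_endo_iso g.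
have g'x : compm g' x = compm a g'.
  by rewrite -[compm a g']comp1m -g'g -!Defs.compA (Defs.compA g a) ga
             -!Defs.compA gg' compm1.
apply/setP => y; apply/conjclassP/conjclassP => -[h hE].
  by exists (compm h g); rewrite -Defs.compA ga !Defs.compA hE.
by exists (compm h g'); rewrite -Defs.compA g'x Defs.compA hE -Defs.compA.
Qed.

Lemma class_rep_mem a : class_rep (conjclass a) \in conjclass a.
Proof. by rewrite /class_rep; case: pickP => //= /(_ a); rewrite conjclass_refl. Qed.

End Conjugacy.

Section FixedOrbits.
Variables (c d : Obj C) (sigma : Hom C d d).

Definition fixed_via (mu : {set Hom C c c}) (O : {set Hom C c d}) : bool :=
  [exists f in O, exists psi in mu, compm sigma f == compm f psi].

Lemma binomX_sum (R : nzSemiRingType) (mu : {set Hom C c c}) :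
  (binomX mu sigma)%:R = \sum_(O in binomset c d) (fixed_via mu O)%:R :> R.
Proof.
rewrite /binomX -sum1_card natr_sum [RHS]big_mkcond [LHS]big_mkcond /=.
apply: eq_bigr => O _; rewrite inE -/(fixed_via mu O).
by case: (_ \in _); case: (fixed_via mu O).
Qed.

Lemma fixed_via_rorbit (f : Hom C c d) x mu : compm sigma f = compm f x ->
  mu \in conjclasses c -> fixed_via mu (rorbit f) = (x \in mu).
Proof.
move=> sf /imsetP[a _ ->]; apply/idP/idP => [|xa]; last first.
  apply/existsP; exists f; rewrite mem_rorbit /=.
  by apply/existsP; exists x; rewrite xa sf eqxx.
case/existsP => _ /andP[/rorbitP[b ->] /existsP[psi /andP[psia /eqP sfb]]].
have xb : compm x b = compm b psi.
  by apply: (@FItype_mono _ _ f); rewrite Defs.compA -sf -Defs.compA sfb Defs.compA.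
rewrite -(conjclass_transr psia); apply/conjclassP; exists b; exact/esym.
Qed.

Lemma fixed_via_orbit_rep (f : Hom C c d) mu :
  fixed_via mu (rorbit f) -> orbit_rep (compm sigma f) = orbit_rep f.
Proof.
case/existsP => _ /andP[/rorbitP[a ->] /existsP[psi /andP[_ /eqP sfa]]].
have [b [_ ab]] := FItype_endo_iso a.
have -> : compm sigma f = compm f (compm a (compm psi b)).
  rewrite -[compm sigma f]compm1 -ab !Defs.compA -(Defs.compA sigma f a) sfa.
  by rewrite -!Defs.compA.
exact: orbit_rep_comp.
Qed.

End FixedOrbits.

Section Induced.
Variables (c : Obj C) (n : nat) (rho : Hom C c c -> 'M[algC]_n).
Hypotheses (rho1 : rho (idm c) = 1%:M)
           (rhoM : forall g h, rho (compm g h) = rho g *m rho h).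

Lemma rep_char_conj a x : x \in conjclass a -> rep_char rho x = rep_char rho a.
Proof.
case/conjclassP => g ga; have [g' [g'g gg']] := FItype_endo_iso g.
rewrite /rep_char; have -> : rho x = rho g *m rho a *m rho g'.
  by rewrite -!rhoM ga -Defs.compA gg' compm1.
by rewrite mxtrace_mulC mulmxA -rhoM g'g rho1 mul1mx.
Qed.

Lemma sum_rep_char_classes x :
  \sum_(mu in conjclasses c) rep_char rho (class_rep mu) * (x \in mu)%:R = rep_char rho x.
Proof.
rewrite (bigD1 (conjclass x)) ?imset_f //= conjclass_refl mulr1.
rewrite (rep_char_conj (class_rep_mem x)) big1 ?addr0 // => _ /andP[/imsetP[a _ ->]].
case: (boolP (x \in conjclass a)) => [/conjclass_transr-> /eqP //|_ _].
by rewrite mulr0.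
Qed.

Section AtObject.
Variable d : Obj C.
Local Notation N := (#|Hom C c d| * n)%N.
Implicit Types (f : Hom C c d) (v : 'cV[algC]_n).

Definition tens_mx f v : 'M[algC]_(#|Hom C c d|, n) :=
  \matrix_(k < #|Hom C c d|, j < n) ((enum_val k == f)%:R * v j 0).

Lemma tensE f v : tens f v = mxvec (tens_mx f v).
Proof. by []. Qed.

Lemma delta_tens_mx (k : 'I_#|Hom C c d|) (j : 'I_n) :
  delta_mx k j = tens_mx (enum_val k) (delta_mx j 0).
Proof.
apply/matrixP => k' j'; rewrite !mxE (inj_eq enum_val_inj) eqxx andbT.
by case: (k' == k); case: (j' == j); rewrite ?mul1r ?mul0r.
Qed.

Lemma tens_act (sigma : Hom C d d) f v :
  tens f v *m act_tens c n sigma = tens (compm sigma f) v.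
Proof.
rewrite mul_rV_lin1_fun => [||a x]; last 2 first.
- by move=> x y; rewrite !linearD.
- by rewrite !linearZ.
rewrite tensE mxvecK; congr mxvec; apply/matrixP => k j; rewrite !mxE.
under eq_bigr => i _ do rewrite !mxE mulrCA.
by rewrite sum_enum_val_eq enum_rankK eq_sym.
Qed.

(* In coordinates, f (x) v |-> orbit_rep f (x) rho (orbit_coord f) v. *)
Definition orbit_proj_fun (M : 'M[algC]_(#|Hom C c d|, n)) : 'M[algC]_(#|Hom C c d|, n) :=
  \matrix_(k < #|Hom C c d|, j < n) \sum_(i < #|Hom C c d|)
     ((orbit_rep (enum_val i) == enum_val k)%:R *
        \sum_(l < n) M i l * rho (orbit_coord (enum_val i)) j l).

Definition orbit_proj : 'M[algC]_N := lin1_mx (fun x => mxvec (orbit_proj_fun (vec_mx x))).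

Lemma orbit_proj_funD : {morph orbit_proj_fun : M M' / M + M'}.
Proof.
move=> M M'; apply/matrixP => k j; rewrite !mxE -big_split; apply: eq_bigr => i _ /=.
rewrite -mulrDr -big_split; congr (_ * _); apply: eq_bigr => l _.
by rewrite !mxE mulrDl.
Qed.

Lemma orbit_proj_funZ a M : orbit_proj_fun (a *: M) = a *: orbit_proj_fun M.
Proof.
apply/matrixP => k j; rewrite !mxE mulr_sumr; apply: eq_bigr => i _ /=.
rewrite [RHS]mulrCA [in RHS]mulr_sumr; congr (_ * _); apply: eq_bigr => l _.
by rewrite !mxE mulrA.
Qed.

Lemma mul_orbit_proj M : mxvec M *m orbit_proj = mxvec (orbit_proj_fun M).
Proof.
rewrite mul_rV_lin1_fun ?mxvecK // => [x y|a x].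
  by rewrite !linearD /= orbit_proj_funD linearD.
by rewrite !linearZ /= orbit_proj_funZ linearZ.
Qed.

Lemma orbit_proj_tens f v :
  tens f v *m orbit_proj = tens (orbit_rep f) (rho (orbit_coord f) *m v).
Proof.
rewrite !tensE mul_orbit_proj; congr mxvec; apply/matrixP => k j; rewrite !mxE.
under eq_bigr => i _ do under eq_bigr => l _ do rewrite !mxE -mulrA.
under eq_bigr => i _ do rewrite -mulr_sumr mulrCA.
rewrite sum_enum_val_eq enum_rankK eq_sym; congr (_ * _).
by apply: eq_bigr => l _; rewrite mulrC.
Qed.

Lemma tens_rel_proj f psi j : tens_rel rho f psi j *m orbit_proj = 0.
Proof.
by rewrite mulmxBl !orbit_proj_tens orbit_rep_comp orbit_coord_comp rhoM mulmxA subrr.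
Qed.

Lemma tens_rel_act (sigma : Hom C d d) f psi j :
  tens_rel rho f psi j *m act_tens c n sigma = tens_rel rho (compm sigma f) psi j.
Proof. by rewrite mulmxBl !tens_act Defs.compA. Qed.

Lemma tens_rel_sub f psi j : (tens_rel rho f psi j <= tens_rels rho d)%MS.
Proof.
apply: (sumsmx_sup f) => //; apply: (sumsmx_sup psi) => //.
by apply: (sumsmx_sup j) => //; rewrite genmxE.
Qed.

Lemma tens_rels_subP m (X : 'M[algC]_(m, N)) :
  reflect (forall f psi j, tens_rel rho f psi j <= X)%MS (tens_rels rho d <= X)%MS.
Proof.
apply: (iffP idP) => [sRX f psi j|sX]; first exact: submx_trans (tens_rel_sub _ _ _) sRX.
apply/sumsmx_subP => f _; apply/sumsmx_subP => psi _.
by apply/sumsmx_subP => j _; rewrite genmxE.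
Qed.

Lemma proj_along_orbit_proj : proj_along (tens_rels rho d) orbit_proj.
Proof.
apply/proj_alongP; split.
  by apply/sub_kermxP/tens_rels_subP => f psi j; apply/sub_kermxP/tens_rel_proj.
apply/row_subP => i; rewrite rowE mulmxBr mulmx1.
case/mxvec_indexP: i => k j; rewrite -mxvec_delta delta_tens_mx -tensE.
by rewrite orbit_proj_tens -{1}(orbit_repP (enum_val k)) tens_rel_sub.
Qed.

Lemma Ind_char_proj (sigma : Hom C d d) :
  Ind_char rho sigma = \tr (act_tens c n sigma *m orbit_proj).
Proof.
apply: mxtrace_factmod proj_along_orbit_proj.
rewrite sumsmxMr; apply/sumsmx_subP => f _; rewrite sumsmxMr; apply/sumsmx_subP => psi _.
rewrite sumsmxMr; apply/sumsmx_subP => j _.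
by rewrite (eqmxMr _ (genmxE _)) tens_rel_act tens_rel_sub.
Qed.

Lemma mxtrace_act_orbit_proj (sigma : Hom C d d) :
  \tr (act_tens c n sigma *m orbit_proj) =
  \sum_f (f == orbit_rep (compm sigma f))%:R * rep_char rho (orbit_coord (compm sigma f)).
Proof.
rewrite mxtrace_mxvec [RHS](reindex _ (onW_bij _ (enum_val_bij _))) /=.
apply: eq_bigr => k _; rewrite /rep_char /mxtrace mulr_sumr; apply: eq_bigr => j _.
rewrite mulmxA delta_tens_mx -tensE tens_act orbit_proj_tens tensE mxvecE mxE.
by rewrite -colE mxE.
Qed.

Lemma orbit_proj_diagE (sigma : Hom C d d) f :
  (f == orbit_rep (compm sigma f))%:R * rep_char rho (orbit_coord (compm sigma f)) =
  if orbit_rep f == f then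
    \sum_(mu in conjclasses c) rep_char rho (class_rep mu) * (fixed_via sigma mu (rorbit f))%:R
  else 0.
Proof.
have [fr|nfr] := eqVneq (orbit_rep f) f; last first.
  case: eqP => [fE|_]; last by rewrite mul0r.
  by rewrite fE orbit_repK eqxx in nfr.
have [fE|nfE] := eqVneq f (orbit_rep (compm sigma f)).
  have sf : compm sigma f = compm f (orbit_coord (compm sigma f)).
    by rewrite {2}fE orbit_repP.
  rewrite mul1r -sum_rep_char_classes; apply: eq_bigr => mu mu_c.
  by rewrite (fixed_via_rorbit sf mu_c).
rewrite mul0r big1 // => mu _; case: (boolP (fixed_via _ _ _)) => [fix_f|_].
  by rewrite (fixed_via_orbit_rep fix_f) fr eqxx in nfE.
by rewrite mulr0.
Qed.

End AtObject.
End Induced.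
End FICategory.

Theorem mainTheorem7 (C : category) (hC : FItype C) (c : Obj C) (n : nat)
    (rho : Hom C c c -> 'M[algC]_n)
    (rho1 : rho (idm c) = 1%:M)
    (rhoM : forall g h : Hom C c c, rho (compm g h) = rho g *m rho h) :
  forall (d : Obj C) (sigma : Hom C d d),
    Ind_char rho sigma =
    \sum_(mu in conjclasses c) rep_char rho (class_rep mu) * (binomX mu sigma)%:R.
Proof.
move=> d sigma.
rewrite (Ind_char_proj hC rhoM) mxtrace_act_orbit_proj.
under [RHS]eq_bigr => mu _ do rewrite binomX_sum mulr_sumr.
rewrite exchange_big /= (sum_binomset hC) [RHS]big_mkcond /=.
by apply: eq_bigr => f _; rewrite (orbit_proj_diagE hC rho1 rhoM).
Qed.
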